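(* On $U$, for each $i=1,\dots,n$ let $\Psi_i\neq0$ be a (column) eigenvector with $L\Psi_i=\lambda_i\Psi_i$. Then $\mathbf{e}^T\Psi_i\neq0$ and $$\tilde\mu_i:=\left.\frac{\mathbf{x}^T(\lambda-L)^\vee\mathbf{e}}{\mathbf{e}^T(\lambda-L)^\vee\mathbf{e}}\right|_{\lambda=\lambda_i}=\frac{\mathbf{x}^T\Psi_i}{\mathbf{e}^T\Psi_i}.$$
   Context: Fix $n\ge1$. On the open subset of $\mathbb{R}^{2n}$ with coordinates $(x_1,\dots,x_n,p_1,\dots,p_n)$ where the $x_i$ are pairwise distinct, let $L$ be the $n\times n$ matrix with $L_{ij}=p_i\delta_{ij}+(1-\delta_{ij})/(x_i-x_j)$. $A^\vee$ denotes the adjugate of a square matrix $A$. $\mathbf{e}=(1,\dots,1)^T$, $\mathbf{x}=(x_1,\dots,x_n)^T$. $U$ is an open set on which $L$ has $n$ pairwise distinct real eigenvalues $\lambda_1,\dots,\lambda_n$. *)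

From HB Require Import structures.
From mathcomp Require Import all_boot all_order all_algebra.
Set Implicit Arguments. Unset Strict Implicit. Unset Printing Implicit Defensive.
Import Order.TTheory GRing.Theory Num.Theory.
Local Open Scope ring_scope.

Definition Lmat (R : fieldType) (n : nat) (x p : 'cV[R]_n) : 'M[R]_n :=
  \matrix_(i, j) (if i == j then p i 0 else (x i 0 - x j 0)^-1).

Definition evec (R : fieldType) (n : nat) : 'cV[R]_n := const_mx 1.

Definition sc (R : fieldType) (M : 'M[R]_1) : R := M 0 0.

From HB Require Import structures.
From mathcomp Require Import all_boot all_order all_algebra.
Import Order.TTheory GRing.Theory Num.Theory.
Local Open Scope ring_scope.

(* Write A = lambda_i - L and B = adj A.  Since lambda_i is a simple root of
   the characteristic polynomial, B acts on the eigenvector Psi as a nonzero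
   scalar c, while B A = det A = 0.  With X = diag(x), the commutation relation
   X L - L X = e e^T - 1 gives A (X Psi) = (e^T Psi) e - Psi, and applying B
   yields (e^T Psi) B e = c Psi.  Hence e^T Psi != 0 and B e is the multiple
   c / (e^T Psi) of Psi, from which both the nonvanishing of e^T B e and the
   formula for mu_i follow. *)

Lemma adj_mul_eigenvector {R : fieldType} {n} {M : 'M[R]_n} {l : R}
    {w : 'cV[R]_n} :
  root (char_poly M) l -> M *m w = l *: w ->
  \adj (l%:M - M) *m w = (char_poly M %/ ('X - l%:P)).[l] *: w.
Proof.
move=> rt Mw.
set q := char_poly M %/ ('X - l%:P).
have chq : char_poly M = q * ('X - l%:P) by rewrite divpK // -root_factor_theorem.
pose W := map_mx (@polyC R) w.
have PW : char_poly_mx M *m W = ('X - l%:P) *: W.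
  by rewrite /char_poly_mx mulmxBl mul_scalar_mx /W -map_mxM Mw map_mxZ scalerBl.
have adjW : \adj (char_poly_mx M) *m W = q *: W.
  have := congr1 (mulmx^~ W) (mul_adj_mx (char_poly_mx M)).
  rewrite /= -mulmxA PW -scalemxAr mul_scalar_mx -/(char_poly M) chq mulrC.
  rewrite -scalerA => /eqP; rewrite -subr_eq0 -scalerBr scalemx_eq0.
  by rewrite polyXsubC_eq0 /= subr_eq0 => /eqP.
have := congr1 (map_mx (horner_eval l)) adjW.
rewrite map_mxM map_mx_adj map_mxZ /W -map_mx_comp.
have -> : map_mx (horner_eval l) (char_poly_mx M) = l%:M - M.
  apply/matrixP => i j; rewrite !mxE /horner_evalE.
  by rewrite rmorphB rmorphMn /= !horner_evalE hornerX hornerC.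
have evalC (v : 'cV[R]_n) : map_mx (horner_eval l \o polyC) v = v.
  by apply/matrixP => i j; rewrite !mxE /= horner_evalE hornerC.
by rewrite !evalC.
Qed.

Lemma horner_divXsubC_simple_root {R : fieldType} {n} (P : {poly R})
    (r : 'I_n -> R) (i : 'I_n) :
  P != 0 -> (size P <= n.+1)%N -> injective r -> (forall k, root P (r k)) ->
  (P %/ ('X - (r i)%:P)).[r i] != 0.
Proof.
move=> P0 szP r_inj rootP; set q := P %/ ('X - (r i)%:P).
have Pq : P = q * ('X - (r i)%:P) by rewrite divpK // -root_factor_theorem.
have q0 : q != 0 by apply: contraNneq P0 => q0; rewrite Pq q0 mul0r.
have szq : (size q <= n)%N.
  by move: szP; rewrite Pq size_Mmonic ?monicXsubC // size_XsubC addn2.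
apply/negP => qri0.
have rootq : all (root q) [seq r k | k <- enum 'I_n].
  apply/allP => _ /mapP [k _ ->]; have [->//|ki] := eqVneq k i.
  move: (rootP k); rewrite Pq rootM root_XsubC => /orP [//|/eqP /r_inj kiE].
  by rewrite kiE eqxx in ki.
have := max_poly_roots q0 rootq.
rewrite map_inj_uniq ?enum_uniq // size_map size_enum_ord => /(_ isT).
by rewrite ltnNge szq.
Qed.

Lemma diag_Lmat_commutator {R : fieldType} {n} (x p : 'cV[R]_n) :
  (forall a b : 'I_n, a != b -> x a 0 != x b 0) ->
  diag_mx x^T *m Lmat x p - Lmat x p *m diag_mx x^T
  = evec R n *m (evec R n)^T - 1%:M.
Proof.
move=> x_inj; apply/matrixP => a b.
rewrite mul_diag_mx mul_mx_diag !mxE big_ord1 !mxE.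
case: eqVneq => [->|ab]; first by rewrite mulrC subrr mulr1 subrr.
rewrite mulr1 mulr0n subr0 mulrC -mulrBr mulVf //.
by rewrite subr_eq0 x_inj.
Qed.

Lemma commutator_eigenvector {R : comPzRingType} {n} {X L : 'M[R]_n}
    {e : 'cV[R]_n} {l : R} {w : 'cV[R]_n} :
  X *m L - L *m X = e *m e^T - 1%:M -> L *m w = l *: w ->
  (l%:M - L) *m (X *m w) = e *m (e^T *m w) - w.
Proof.
move=> XL Lw; have := congr1 (mulmx^~ w) XL.
rewrite /= !mulmxBl -!mulmxA Lw -scalemxAr mul1mx => <-.
by rewrite mul_scalar_mx.
Qed.

Lemma sc_scale {R : fieldType} (a : R) (M : 'M[R]_1) : sc (a *: M) = a * sc M.
Proof. by rewrite /sc mxE. Qed.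

Theorem mainTheorem10 (R : realFieldType) (n : nat) (x p : 'cV[R]_n)
  (lam : 'I_n -> R) (i : 'I_n) (Psi : 'cV[R]_n) :
  (0 < n)%N ->
  (forall a b : 'I_n, a != b -> x a 0 != x b 0) ->
  injective lam ->
  (forall k : 'I_n, eigenvalue (Lmat x p) (lam k)) ->
  Psi != 0 ->
  Lmat x p *m Psi = lam i *: Psi ->
  sc ((evec R n)^T *m Psi) != 0 /\
  sc ((evec R n)^T *m \adj ((lam i)%:M - Lmat x p) *m evec R n) != 0 /\
  sc (x^T *m \adj ((lam i)%:M - Lmat x p) *m evec R n)
    / sc ((evec R n)^T *m \adj ((lam i)%:M - Lmat x p) *m evec R n)
  = sc (x^T *m Psi) / sc ((evec R n)^T *m Psi).
Proof.
move=> _ x_inj lam_inj eig Psi0 LPsi.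
set L := Lmat x p in eig LPsi *; set e := evec R n.
set A := (lam i)%:M - L; set B := \adj A.
have rootL k : root (char_poly L) (lam k) by rewrite -eigenvalue_root_char.
set c := (char_poly L %/ ('X - (lam i)%:P)).[lam i].
have c0 : c != 0.
  by apply: horner_divXsubC_simple_root; rewrite ?monic_neq0 ?char_poly_monic
    ?size_char_poly.
have detA : \det A = 0.
  apply/eqP; rewrite -det_tr; apply/det0P; exists Psi^T; rewrite ?trmx_eq0 //.
  by rewrite -trmx_mul mulmxBl mul_scalar_mx LPsi subrr trmx0.
have BeePsi : B *m e *m (e^T *m Psi) = c *: Psi.
  have := congr1 (mulmx B)
    (commutator_eigenvector (diag_Lmat_commutator x p x_inj) LPsi).
  rewrite -/L -/A -/e !mulmxA mul_adj_mx detA raddf0 !mul0mx mulmxBr.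
  rewrite (adj_mul_eigenvector (rootL i) LPsi) => /eqP.
  by rewrite eq_sym subr_eq0 !mulmxA => /eqP.
set s := sc (e^T *m Psi).
have Be : s *: (B *m e) = c *: Psi.
  by rewrite -BeePsi [e^T *m Psi]mx11_scalar mul_mx_scalar.
have s0 : s != 0.
  apply: contra_neq Psi0 => s0; apply/eqP.
  by move: Be; rewrite s0 scale0r => /esym/eqP; rewrite scalemx_eq0 (negPf c0).
have {}Be : B *m e = (c / s) *: Psi.
  by apply: (scalerI s0); rewrite Be scalerA mulrC divfK.
rewrite -!mulmxA Be -!scalemxAr !sc_scale -/s mulfVK //.
split=> //; split=> //.
by rewrite mulrAC (mulrAC c) divff // mul1r mulrC.
Qed.
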